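(* Let $W\ge1$ be an integer, $\xi\in\mathbb Z$ and $r\ge1$ an integer. For the one-dimensional band graph $\Gamma_{1,W}$, the Green's function $G_r$ of $B_r(\xi)$ satisfies, for all $x\in B_r(\xi)$, $$\frac1{2W^3}\big(rW+1-|x-\xi|\big)\le G_r(\xi,x)\le\frac1{W^2}\big(W+rW-|x-\xi|\big),$$ and the Poisson kernel satisfies, for all $x\in\partial B_r(\xi)$, $$\frac1{2W^3}\le P_r(\xi,x)\le1.$$
   Context: $\Gamma_{1,W}$ has vertex set $\mathbb Z$ with $x\sim y$ iff $0<|x-y|\le W$ (each vertex has degree $2W$). $B_r(\xi)=\{x\in\mathbb Z:|x-\xi|\le rW\}$ and $\partial B_r(\xi)=\{x:rW<|x-\xi|\le(r+1)W\}$. The Dirichlet Laplacian $-\Delta^{B_r}$ is the matrix on $\ell^2(B_r(\xi))$ with entries $2W\delta_{xy}-\mathbf 1_{0<|x-y|\le W}$, $x,y\in B_r(\xi)$; $G_r(x,y)=(-\Delta^{B_r})^{-1}(x,y)$ for $x,y\in B_r(\xi)$. The Poisson kernel is $P_r(\xi,x)=\sum_{y\in B_r(\xi),\,0<|x-y|\le W}G_r(\xi,y)$ for $x\in\partial B_r(\xi)$ (equivalently, $P_r(\cdot,x)$ is the harmonic function on $B_r(\xi)$ with boundary values $\delta_x$ on $\partial B_r(\xi)$). *)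

From HB Require Import structures.
From mathcomp Require Import all_boot all_order all_algebra.
Unset Printing Implicit Defensive.
Import Order.TTheory GRing.Theory Num.Theory.
Local Open Scope ring_scope.

Definition adjZ (W : nat) (x y : int) : bool :=
  (0 < `|x - y|) && (`|x - y| <= W%:Z).

Definition ballZ (W r : nat) (xi x : int) : bool := `|x - xi| <= (r * W)%:Z.

Definition bndZ (W r : nat) (xi x : int) : bool :=
  ((r * W)%:Z < `|x - xi|) && (`|x - xi| <= ((r + 1) * W)%:Z).

Definition bsz (W r : nat) : nat := (2 * r * W).+1.

(* The ball B_r(xi) has 2 r W + 1 points; index i : 'I_(2rW+1) corresponds
   to the point xi - r W + i. *)
Definition ptZ (W r : nat) (xi : int) (i : 'I_(bsz W r)) : int :=
  xi - (r * W)%:Z + (i : nat)%:Z.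

Definition idxZ (W r : nat) (xi x : int) : 'I_(bsz W r) :=
  inord (absz (x - xi + (r * W)%:Z)).

Definition dirLap (R : nzRingType) (W r : nat) (xi : int) : 'M[R]_(bsz W r) :=
  \matrix_(i, j) ((2 * W)%:R * (i == j)%:R
                  - (adjZ W (ptZ W r xi i) (ptZ W r xi j))%:R).

(* Green's function G_r(x,y) = (-Delta^{B_r})^{-1}(x,y) for x, y in B_r(xi)
   (set to 0 outside the ball; only used inside). *)
Definition greenZ (R : fieldType) (W r : nat) (xi x y : int) : R :=
  if ballZ W r xi x && ballZ W r xi y then
    invmx (dirLap R W r xi) (idxZ W r xi x) (idxZ W r xi y)
  else 0.

Definition poissonZ (R : fieldType) (W r : nat) (xi x : int) : R :=
  \sum_(j < bsz W r | adjZ W x (ptZ W r xi j))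
     greenZ R W r xi xi (ptZ W r xi j).

From Pilot Require Import Defs.
From HB Require Import structures.
From mathcomp Require Import all_boot all_order all_algebra.
From mathcomp Require Import zify ring lra.

Set Implicit Arguments.
Unset Strict Implicit.
Unset Printing Implicit Defensive.

Import Order.TTheory GRing.Theory Num.Theory.
Local Open Scope ring_scope.

(* The Dirichlet Laplacian of the ball obeys a minimum principle: a function
   vanishing outside the ball whose Laplacian is nonnegative inside is
   nonnegative (look at the leftmost point where its minimum is attained).
   Hence G_r(xi, .), whose Laplacian is the Dirac mass at xi, is squeezed
   between barriers built from tents a - |x - xi|, whose band Laplacian at
   distance t from the apex is (W - t)(W - t + 1) for t <= W and 0 beyond:
   the tent of height (r + 1) W scaled by W^-2 is a supersolution, and the tent
   vanishing just outside the ball scaled by (2 W^3)^-1, raised at xi by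
   (W - 1) / (2 W^2), is a subsolution.  By symmetry of the Laplacian,
   P_r(xi, x) is the value at xi of the solution with source 1_{. ~ x}, which
   the constant 1 dominates because every neighbour of x is a missing
   neighbour of the ball; the lower bound comes from the end of the ball on
   the side of x, where the lower barrier equals (2 W^3)^-1. *)

Lemma sum_ramp (W a : nat) :
  (\sum_(k < W) 2 * (k.+1 - a) = (W - a) * (W - a).+1)%N.
Proof.
elim: W => [|W IH]; first by rewrite big_ord0.
by rewrite big_ord_recr /= IH; nia.
Qed.

Lemma sumr_eq_succ (R : nzRingType) (w : nat) (t : int) :
  \sum_(k < w) ((t == k.+1%:Z)%:R : R) = ((0 < t) && (t <= w%:Z))%:R.
Proof.
elim: w => [|w IH]; first by rewrite big_ord0 (_ : _ && _ = false) //; lia.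
rewrite big_ord_recr /= IH.
case E1: (_ && _); case E2: (t == _); case E3: (_ && _) => //=;
  rewrite ?addr0 ?add0r //; move: E1 E2 E3; lia.
Qed.

Lemma adjZ_sum (R : nzRingType) (W : nat) (a b : int) :
  ((Defs.adjZ W a b)%:R : R) =
  \sum_(k < W) ((a - b == k.+1%:Z)%:R + (b - a == k.+1%:Z)%:R).
Proof.
rewrite big_split /= !sumr_eq_succ /Defs.adjZ.
case E1: (_ && _); case E2: (_ && _); case E3: (_ && _) => //=;
  rewrite ?addr0 ?add0r //; move: E1 E2 E3; lia.
Qed.

Section BandLaplacian.
Variables (R : realFieldType) (W : nat).

Definition lapZ (f : int -> R) (m : int) : R :=
  \sum_(k < W) (2 * f m - f (m + k.+1%:Z) - f (m - k.+1%:Z)).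

Lemma lapZE f m :
  lapZ f m = (2 * W)%:R * f m - \sum_(k < W) (f (m + k.+1%:Z) + f (m - k.+1%:Z)).
Proof.
rewrite /lapZ (eq_bigr (fun k : 'I_W => 2 * f m - (f (m + k.+1%:Z) + f (m - k.+1%:Z)))).
  by rewrite sumrB sumr_const card_ord -mulr_natr natrM; ring.
by move=> k _; ring.
Qed.

Lemma lapZB f g m : lapZ (fun z => f z - g z) m = lapZ f m - lapZ g m.
Proof. by rewrite /lapZ -sumrB; apply: eq_bigr => k _ /=; ring. Qed.

Lemma lapZD f g m : lapZ (fun z => f z + g z) m = lapZ f m + lapZ g m.
Proof. by rewrite /lapZ -big_split; apply: eq_bigr => k _ /=; ring. Qed.

Lemma lapZN f m : lapZ (fun z => - f z) m = - lapZ f m.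
Proof. by rewrite /lapZ -sumrN; apply: eq_bigr => k _ /=; ring. Qed.

Lemma lapZZ (a : R) f m : lapZ (fun z => a * f z) m = a * lapZ f m.
Proof. by rewrite /lapZ mulr_sumr; apply: eq_bigr => k _ /=; ring. Qed.

Lemma ler_lapZ f g m : f m = g m ->
  (forall z, `|z - m| <= W%:Z -> f z <= g z) -> lapZ g m <= lapZ f m.
Proof.
move=> fgm fg; rewrite /lapZ fgm; apply: ler_sum => k _.
have kW := ltn_ord k.
have := fg (m + k.+1%:Z) ltac:(lia); have := fg (m - k.+1%:Z) ltac:(lia); lra.
Qed.

Lemma lapZ_tent (a d : R) (c m : int) :
  lapZ (fun z => (a - (`|z - c|)%:~R) / d) m
  = ((W - absz (m - c)) * (W - absz (m - c)).+1)%:R / d.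
Proof.
rewrite -sum_ramp natr_sum mulr_suml; apply: eq_bigr => k _.
have e : (2 * (k.+1 - absz (m - c)))%N%:Z =
    `|m + k.+1%:Z - c| + `|m - k.+1%:Z - c| - (`|m - c| + `|m - c|) by lia.
rewrite (_ : (2 * (k.+1 - absz (m - c)))%:R = (2 * (k.+1 - absz (m - c)))%N%:Z%:~R) //.
by rewrite e !(intrD, intrN) /=; ring.
Qed.

Lemma lapZ_indicator (c m : int) :
  lapZ (fun z => (z == c)%:R) m = (2 * W)%:R * (m == c)%:R - (Defs.adjZ W c m)%:R.
Proof.
rewrite lapZE adjZ_sum; congr (_ - _); apply: eq_bigr => k _.
by congr (_%:R + _%:R); apply/eqP/eqP; lia.
Qed.

Variable n : nat.

Definition in_box (z : int) : bool := (0 <= z) && (z < n%:Z).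

Definition zext (f : int -> R) (z : int) : R := if in_box z then f z else 0.

Lemma zext_in f z : in_box z -> zext f z = f z.
Proof. by rewrite /zext => ->. Qed.

Lemma zext_out f z : ~~ in_box z -> zext f z = 0.
Proof. by rewrite /zext => /negPf ->. Qed.

Lemma in_box_ord (i : 'I_n) : in_box (i : nat)%:Z.
Proof. by have := ltn_ord i; rewrite /in_box; lia. Qed.

Lemma in_boxP m : in_box m -> exists i : 'I_n, m = (i : nat)%:Z.
Proof.
rewrite /in_box => m_box; have mn : (absz m < n)%N by lia.
by exists (Ordinal mn); rewrite /=; lia.
Qed.

Hypothesis W_gt0 : (0 < W)%N.

Lemma lapZ_min_principle (f : int -> R) :
  (forall z, ~~ in_box z -> f z = 0) ->
  (forall m, in_box m -> 0 <= lapZ f m) ->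
  forall m, in_box m -> 0 <= f m.
Proof.
move=> f_out lapf_ge0 m0 m0_box; rewrite leNgt; apply/negP => fm0_lt0.
have m0n : (absz m0 < n)%N by move: m0_box; rewrite /in_box; lia.
have [i0 _ i0_min] := @arg_minP _ _ _ (Ordinal m0n) xpredT
  (fun i : 'I_n => f (i : nat)%:Z) isT.
set mu := f (i0 : nat)%:Z in i0_min.
have abszK z : in_box z -> (absz z)%:Z = z by rewrite /in_box; lia.
have mu_lt0 : mu < 0.
  by apply: le_lt_trans fm0_lt0; have := i0_min (Ordinal m0n) isT; rewrite /= abszK.
have mu_le z : mu <= f z.
  case: (boolP (in_box z)) => [z_box|/f_out ->]; last exact: ltW.
  have zn : (absz z < n)%N by move: z_box; rewrite /in_box; lia.
  by have := i0_min (Ordinal zn) isT; rewrite /= abszK.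
have [k /eqP fk k_min] := ex_minnP (ex_intro (fun k => f k%:Z == mu) _ (eqxx mu)).
have k_box : in_box k%:Z.
  by apply: contraT => /f_out fk0; move: mu_lt0; rewrite -fk fk0 ltxx.
(* [k] is the leftmost minimiser, so its left neighbour is strictly larger *)
have mu_lt_left : mu < f (k%:Z - 1).
  case: k k_min fk k_box => [_ _ _|k k_min _ _].
    by rewrite f_out //; rewrite /in_box; lia.
  rewrite lt_def mu_le andbT (_ : k.+1%:Z - 1 = k%:Z); last by lia.
  by apply/negP => /k_min; rewrite ltnn.
have := lapf_ge0 _ k_box; rewrite /lapZ fk; case: W W_gt0 => // w _.
rewrite big_ord_recl /=.
have other_terms : \sum_(i < w) (2 * mu - f (k%:Z + (bump 0 i).+1%:Z)
                                     - f (k%:Z - (bump 0 i).+1%:Z)) <= 0.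
  apply: sumr_le0 => i _.
  by move: (mu_le (k%:Z + (bump 0 i).+1%:Z)) (mu_le (k%:Z - (bump 0 i).+1%:Z)); lra.
by move: (mu_le (k%:Z + 1)); lra.
Qed.

Lemma lapZ_comparison (f g : int -> R) :
  (forall m, in_box m -> lapZ (zext f) m <= lapZ (zext g) m) ->
  forall m, in_box m -> f m <= g m.
Proof.
move=> lap_fg m m_box; rewrite -subr_ge0 -(zext_in f m_box) -(zext_in g m_box).
apply: (@lapZ_min_principle (fun z => zext g z - zext f z)) => // [z z_out|k k_box].
  by rewrite !zext_out ?subrr.
by rewrite lapZB subr_ge0; apply: lap_fg.
Qed.

Lemma lapZ_zext_eq0 f : (forall m, in_box m -> lapZ (zext f) m = 0) ->
  forall m, in_box m -> f m = 0.
Proof.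
move=> lap0 m m_box; rewrite -(zext_in f m_box); apply/eqP; rewrite eq_le.
apply/andP; split; last first.
  by apply: lapZ_min_principle => // [z|k k_box]; [exact: zext_out | rewrite lap0].
rewrite -oppr_ge0.
apply: (@lapZ_min_principle (fun z => - zext f z)) => // [z z_out|k k_box].
  by rewrite zext_out ?oppr0.
by rewrite lapZN lap0 ?oppr0.
Qed.

Lemma adjZ_le_lapZ_one (y m : int) : ~~ in_box y -> in_box m ->
  (Defs.adjZ W y m)%:R <= lapZ (zext (fun _ => 1)) m.
Proof.
move=> y_out m_box; rewrite adjZ_sum /lapZ zext_in //; apply: ler_sum => k _.
rewrite /zext; case H1: (in_box _); case H2: (in_box _);
  case E1: (_ == _); case E2: (_ == _) => //=; rewrite ?addr0 ?add0r ?subr0;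
  try lra; move: H1 H2 E1 E2 y_out; rewrite /in_box; lia.
Qed.

End BandLaplacian.

Section DirichletGreen.
Variables (R : realFieldType) (W r : nat) (xi : int).
Hypothesis W_gt0 : (0 < W)%N.
Local Notation n := (bsz W r).
Local Notation L := (dirLap R W r xi).
Local Notation c := (r * W)%:Z.

Definition rowfun (v : 'rV[R]_n) (z : int) : R := v 0 (inord (absz z)).

Lemma rowfun_ord v (i : 'I_n) : rowfun v (i : nat)%:Z = v 0 i.
Proof. by rewrite /rowfun absz_nat inord_val. Qed.

Lemma zext_rowfun v t :
  zext n (rowfun v) t = \sum_(i < n) v 0 i * ((i : nat)%:Z == t)%:R.
Proof.
case: (boolP (in_box n t)) => [/in_boxP [j ->]|t_out].
  rewrite zext_in ?in_box_ord // rowfun_ord (bigD1 j) //= eqxx mulr1 big1 ?addr0 //.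
  by move=> i /negPf ij; rewrite (_ : (_ == _) = false) ?mulr0.
rewrite zext_out // big1 // => i _; rewrite (_ : (_ == _) = false) ?mulr0 //.
by apply: contraNF t_out => /eqP <-; apply: in_box_ord.
Qed.

Lemma mulmx_dirLap v (i : 'I_n) :
  (v *m L) 0 i = lapZ W (zext n (rowfun v)) (i : nat)%:Z.
Proof.
rewrite lapZE zext_in ?in_box_ord // rowfun_ord mxE.
under eq_bigr => j _ do rewrite mxE mulrBr.
rewrite sumrB; congr (_ - _).
  rewrite (bigD1 i) //= eqxx mulr1 mulrC big1 ?addr0 // => j /negPf ->.
  by rewrite !mulr0.
under eq_bigr => j _ do rewrite adjZ_sum mulr_sumr.
rewrite exchange_big /=; apply: eq_bigr => k _.
rewrite !zext_rowfun -big_split /=; apply: eq_bigr => j _.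
by rewrite -mulrDr; congr (_ * (_%:R + _%:R)); rewrite /ptZ; apply/eqP/eqP; lia.
Qed.

Lemma dirLap_unit : L \in unitmx.
Proof.
rewrite unitmxE unitfE; apply/det0P => [[v v_neq0 vL0]].
move/eqP: v_neq0; apply; apply/matrixP => i j; rewrite ord1 mxE -rowfun_ord.
apply: (lapZ_zext_eq0 W_gt0) => [m /in_boxP [k ->]|]; last exact: in_box_ord.
by rewrite -mulmx_dirLap vL0 mxE.
Qed.

Lemma tr_dirLap : L^T = L.
Proof.
apply/matrixP => i j; rewrite !mxE eq_sym; congr (_ - _%:R).
by rewrite /Defs.adjZ /ptZ; lia.
Qed.

Definition green_row : 'rV[R]_n := row (inord (r * W)) (invmx L).

Lemma lapZ_green_row m : in_box n m ->
  lapZ W (zext n (rowfun green_row)) m = (m == c)%:R.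
Proof.
move=> /in_boxP [i ->]; rewrite -mulmx_dirLap -row_mul mulVmx ?dirLap_unit // !mxE.
have cn : (r * W < n)%N by rewrite /bsz; lia.
congr (nat_of_bool _)%:R; apply/idP/idP => [/eqP <-|/eqP ic]; first by rewrite inordK.
by apply/eqP; apply: val_inj; rewrite /= inordK //; case: ic.
Qed.

Lemma green_row_ge0 (j : 'I_n) : 0 <= green_row 0 j.
Proof.
rewrite -rowfun_ord -(zext_in _ (in_box_ord j)).
apply: (lapZ_min_principle W_gt0) => [z|k k_box|]; last exact: in_box_ord.
  exact: zext_out.
by rewrite lapZ_green_row.
Qed.

Lemma green_row_ub m : in_box n m ->
  rowfun green_row m <= (W%:R + (r * W)%:R - (`|m - c|)%:~R) / W%:R ^+ 2.
Proof.
pose h z : R := (W%:R + (r * W)%:R - (`|z - c|)%:~R) / W%:R ^+ 2.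
apply: (lapZ_comparison W_gt0 (f := rowfun green_row) (g := h)) => // k k_box.
rewrite lapZ_green_row //.
apply: (@le_trans _ _ (lapZ W h k)); last first.
  apply: ler_lapZ => [|z kz]; first by rewrite zext_in.
  rewrite /zext; case: ifP => // _.
  apply: divr_ge0; last by rewrite exprn_ge0.
  rewrite -natrD subr_ge0 (_ : (W + r * W)%:R = (W + r * W)%:Z%:~R) // ler_int.
  by move: k_box kz; rewrite /in_box /bsz; lia.
rewrite /h lapZ_tent; case: eqP => [->|_]; last by rewrite divr_ge0 ?exprn_ge0.
rewrite subrr absz0 subn0 ler_pdivlMr ?exprn_gt0 ?ltr0n // mul1r -natrX ler_nat.
by rewrite expnS expn1 leq_mul.
Qed.

Lemma green_row_lb m : in_box n m ->
  ((r * W)%:R + 1 - (`|m - c|)%:~R) / (2 * W%:R ^+ 3) <= rowfun green_row m.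
Proof.
have D_gt0 : (0 : R) < 2 * W%:R ^+ 3 by rewrite mulr_gt0 ?exprn_gt0 ?ltr0n.
have DE : (2 * W%:R ^+ 3 : R) = (2 * W ^ 3)%:R by rewrite natrM natrX.
pose g z : R := ((r * W)%:R + 1 - (`|z - c|)%:~R) / (2 * W%:R ^+ 3).
pose a : R := (W.-1 * W)%:R / (2 * W%:R ^+ 3).
(* Next to the centre [lapZ g] can be as large as [a]; the bump cancels it. *)
pose phi z := g z + a * (z == c)%:R.
move=> m_box; apply: (@le_trans _ _ (phi m)).
  by rewrite /phi /g lerDl mulr_ge0 ?divr_ge0 ?ler0n // ltW.
move: m m_box.
apply: (lapZ_comparison W_gt0 (f := phi) (g := rowfun green_row)) => k k_box.
rewrite lapZ_green_row //.
apply: (@le_trans _ _ (lapZ W phi k)).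
  apply: ler_lapZ => [|z _]; first by rewrite zext_in.
  rewrite /zext; case: ifP => // z_out.
  have zc : (z == c) = false.
    by apply: contraFF z_out => /eqP ->; rewrite /in_box /bsz; lia.
  rewrite /phi zc mulr0 addr0 /g mulr_le0_ge0 ?invr_ge0 ?(ltW D_gt0) // subr_le0.
  rewrite (_ : (r * W)%:R + 1 = ((r * W).+1%:Z)%:~R :> R); last by rewrite natr1.
  by rewrite ler_int; move: z_out; rewrite /in_box /bsz; lia.
rewrite lapZD lapZZ lapZ_tent lapZ_indicator /a DE.
case: (eqVneq k c) => [->|k_neq_c].
  have -> : absz (c - c) = 0%N by lia.
  rewrite subn0 (_ : Defs.adjZ W c c = false) /=; last by rewrite /Defs.adjZ; lia.
  rewrite mulr1 subr0 mulrAC -mulrDl ler_pdivrMr ?ltr0n ?muln_gt0 ?expn_gt0 ?W_gt0 //.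
  rewrite mul1r -!natrM -natrD ler_nat; case: W W_gt0 => // w _; nia.
rewrite mulr0 sub0r mulrN.
case: (boolP (Defs.adjZ W c k)) => adj_ck /=.
  rewrite mulr1 subr_le0 ler_pM2r ?invr_gt0 ?ltr0n ?muln_gt0 ?expn_gt0 ?W_gt0 // ler_nat.
  by move: adj_ck; rewrite /Defs.adjZ => adj_ck; apply: leq_mul; lia.
rewrite (_ : (W - absz (k - c) = 0)%N); last first.
  by move: adj_ck k_neq_c; rewrite /Defs.adjZ; lia.
by rewrite mul0r mulr0 subr0.
Qed.

Lemma greenZ_row x : ballZ W r xi x ->
  greenZ R W r xi xi x = rowfun green_row (x - xi + c).
Proof.
move=> x_ball; rewrite /greenZ x_ball (_ : ballZ W r xi xi) /=; last first.
  by rewrite /ballZ; lia.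
by rewrite /idxZ /rowfun /green_row mxE subrr add0r.
Qed.

Lemma poissonZ_row x :
  poissonZ R W r xi x
  = \sum_(j < n | Defs.adjZ W (x - xi + c) (j : nat)%:Z) green_row 0 j.
Proof.
have ptE (j : 'I_n) : ptZ W r xi j - xi + c = (j : nat)%:Z by rewrite /ptZ; lia.
apply: congr_big => // [j|j _].
  by rewrite /Defs.adjZ -[in RHS](ptE j); congr (_ && _); lia.
rewrite greenZ_row ?ptE ?rowfun_ord //.
by have := ltn_ord j; rewrite /ballZ /ptZ /bsz; lia.
Qed.

Lemma poissonZ_lb x : bndZ W r xi x -> 1 / (2 * W%:R ^+ 3) <= poissonZ R W r xi x.
Proof.
move=> x_bnd; rewrite poissonZ_row.
pose j0 : 'I_n := inord (if 0 < x - xi then (2 * r * W)%N else 0%N).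
have j0E : (j0 : nat) = (if 0 < x - xi then (2 * r * W)%N else 0%N).
  by rewrite inordK //; case: ifP; rewrite /bsz.
have adj_j0 : Defs.adjZ W (x - xi + c) (j0 : nat)%:Z.
  by move: x_bnd; rewrite /bndZ /Defs.adjZ j0E; case: ifP; lia.
rewrite (bigD1 j0) //=; apply: le_trans (_ : green_row 0 j0 <= _); last first.
  by rewrite lerDl sumr_ge0 // => j _; apply: green_row_ge0.
rewrite -rowfun_ord; apply: le_trans (green_row_lb (in_box_ord j0)).
rewrite (_ : `|(j0 : nat)%:Z - c| = c); last by rewrite j0E; case: ifP; lia.
by rewrite addrAC subrr add0r.
Qed.

Lemma poissonZ_ub x : bndZ W r xi x -> poissonZ R W r xi x <= 1.
Proof.
move=> x_bnd; rewrite poissonZ_row; set y := x - xi + c.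
have y_out : ~~ in_box n y by move: x_bnd; rewrite /bndZ /in_box /bsz /y; lia.
pose b : 'rV[R]_n := \row_j (Defs.adjZ W y (j : nat)%:Z)%:R.
have -> : \sum_(j < n | Defs.adjZ W y (j : nat)%:Z) green_row 0 j
          = rowfun (b *m invmx L) c.
  rewrite /rowfun mxE big_mkcond /=; apply: eq_bigr => j _.
  rewrite /b /green_row !mxE -[in RHS]tr_dirLap -trmx_inv mxE.
  by case: ifP; rewrite ?mul1r ?mul0r.
have c_box : in_box n c by rewrite /in_box /bsz; lia.
move: c_box.
apply: (lapZ_comparison W_gt0 (f := rowfun (b *m invmx L)) (g := fun _ => 1)).
move=> _ /in_boxP [k ->].
rewrite -mulmx_dirLap -mulmxA mulVmx ?dirLap_unit // mulmx1 mxE.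
exact: adjZ_le_lapZ_one (in_box_ord k).
Qed.

End DirichletGreen.

Theorem lemmaB1 (R : realFieldType) (W r : nat) (xi : int) :
  (1 <= W)%N -> (1 <= r)%N ->
  (forall x : int, ballZ W r xi x ->
     ((r * W)%:R + 1 - (`|x - xi|)%:~R) / (2 * W%:R ^+ 3) <= greenZ R W r xi xi x
     /\ greenZ R W r xi xi x <= (W%:R + (r * W)%:R - (`|x - xi|)%:~R) / W%:R ^+ 2)
  /\
  (forall x : int, bndZ W r xi x ->
     1 / (2 * W%:R ^+ 3) <= poissonZ R W r xi x /\ poissonZ R W r xi x <= 1).
Proof.
move=> W_gt0 _; split=> x x_in; last by split; [apply: poissonZ_lb | apply: poissonZ_ub].
have x_box : in_box (bsz W r) (x - xi + (r * W)%:Z).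
  by move: x_in; rewrite /ballZ /in_box /bsz; lia.
have distE : `|x - xi| = `|x - xi + (r * W)%:Z - (r * W)%:Z| by rewrite addrK.
rewrite greenZ_row // distE.
by split; [apply: green_row_lb | apply: green_row_ub].
Qed.
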